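(* Let $B,B'\in M_n(R)$ with $B'=A^\nabla BA$ for some non-singular $A\in M_n(R)$. Then: (1) every supertropical eigenvalue of $B$ is a supertropical eigenvalue of $B'$; (2) if all coefficients of $f_{B'}$ are tangible (or $0_R$), then $f_{B'}=f_B$; (3) $f_{B'}(B)$ is a ghost matrix, i.e. all its entries lie in $G\cup\{0_R\}$.
   Context: Supertropical semiring $R=T\cup G\cup\{-\infty\}$: $T=\mathcal G$ an ordered abelian group (tangible), $G=\{a^\nu\}$ a copy (ghost); $a+b$ is the element of larger $\nu$-value if the $\nu$-values differ and $a^\nu$ if equal; multiplication adds $\nu$-values, is ghost if a factor is ghost, $-\infty$ absorbing; $0_R=-\infty$, $1_R=0$. $\det(A)=\sum_{\sigma\in S_n}\prod_i a_{i,\sigma(i)}$; $A$ non-singular iff $\det(A)\in T$; $\operatorname{adj}(A)_{i,j}=\det(A_{j,i})$; $A^\nabla=\det(A)^{-1}\operatorname{adj}(A)$. Characteristic polynomial $f_M(x)=\det(xI+M)$, the formal polynomial whose $x^k$-coefficient is the sum of determinants of the $(n-k)\times(n-k)$ principal submatrices of $M$. For a polynomial $f=\sum c_ix^i$, $f(r)=\sum c_ir^i$ and $f(M)=\sum c_iM^i$ with $M^0=I$. A supertropical eigenvalue of $M$ is an element $\lambda\in T\cup\{0_R\}$ that is a root of $f_M$, i.e. $f_M(\lambda)\in G\cup\{0_R\}$. *)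

From HB Require Import structures.
From mathcomp Require Import all_boot all_order all_algebra all_fingroup.
Set Implicit Arguments. Unset Strict Implicit. Unset Printing Implicit Defensive.
Import Order.TTheory GRing.Theory.
Local Open Scope order_scope.

Record ordAbGroup := OrdAbGroup {
  oag_sort :> zmodType;
  oag_le : rel oag_sort;
  oag_le_refl : reflexive oag_le;
  oag_le_anti : antisymmetric oag_le;
  oag_le_trans : transitive oag_le;
  oag_le_total : total oag_le;
  oag_leD2r : forall x y z : oag_sort, oag_le x y -> oag_le (x + z)%R (y + z)%R
}.

Definition oag_lt (G : ordAbGroup) (x y : G) : bool :=
  oag_le x y && ~~ oag_le y x.

Section Supertropical.
Variable G : ordAbGroup.

(* Elements of R = T ∪ G ∪ {-oo}: tangible a, ghost a^nu, zero -oo. *)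
Inductive stR : Type :=
| stZero : stR
| stTan  : G -> stR
| stGh   : G -> stR.

Definition st_one : stR := stTan 0%R.   (* 1_R = 0 *)

Definition st_add (x y : stR) : stR :=
  match x, y with
  | stZero, _ => y
  | _, stZero => x
  | stTan a, stTan b | stTan a, stGh b | stGh a, stTan b | stGh a, stGh b =>
      if oag_lt a b then y else if oag_lt b a then x else stGh a
  end.

Definition st_mul (x y : stR) : stR :=
  match x, y with
  | stZero, _ | _, stZero => stZero
  | stTan a, stTan b => stTan (a + b)%R
  | stTan a, stGh b | stGh a, stTan b | stGh a, stGh b => stGh (a + b)%R
  end.

Definition st_tanz (x : stR) : bool := if x is stGh _ then false else true.
Definition st_ghostz (x : stR) : bool := if x is stTan _ then false else true.
Definition st_tangible (x : stR) : bool := if x is stTan _ then true else false.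

(* inverse of a tangible element (irrelevant value elsewhere) *)
Definition st_inv (x : stR) : stR :=
  match x with stTan a => stTan (- a)%R | _ => stZero end.

Definition st_pow (x : stR) (k : nat) : stR := iter k (st_mul x) st_one.

Definition st_idmx n : 'M[stR]_n :=
  \matrix_(i, j) (if i == j then st_one else stZero).

Definition st_mulmx n (A B : 'M[stR]_n) : 'M[stR]_n :=
  \matrix_(i, j) \big[st_add/stZero]_(k < n) st_mul (A i k) (B k j).

Definition st_addmx n (A B : 'M[stR]_n) : 'M[stR]_n :=
  \matrix_(i, j) st_add (A i j) (B i j).

Definition st_scalemx n (c : stR) (A : 'M[stR]_n) : 'M[stR]_n :=
  \matrix_(i, j) st_mul c (A i j).

Definition st_zeromx n : 'M[stR]_n := \matrix_(i, j) stZero.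

Definition st_expmx n (M : 'M[stR]_n) (k : nat) : 'M[stR]_n :=
  iter k (st_mulmx M) (st_idmx n).

Definition st_det n (A : 'M[stR]_n) : stR :=
  \big[st_add/stZero]_(s : 'S_n) \big[st_mul/st_one]_(i < n) A i (s i).

Definition st_nonsingular n (A : 'M[stR]_n) : bool := st_tangible (st_det A).

Definition st_minor n (j i : 'I_n) (A : 'M[stR]_n) : 'M[stR]_(n.-1) :=
  \matrix_(k, l) A (lift j k) (lift i l).

Definition st_adj n (A : 'M[stR]_n) : 'M[stR]_n :=
  \matrix_(i, j) st_det (st_minor j i A).

Definition st_nabla n (A : 'M[stR]_n) : 'M[stR]_n :=
  st_scalemx (st_inv (st_det A)) (st_adj A).

Definition st_principal n (S : {set 'I_n}) (A : 'M[stR]_n) : 'M[stR]_#|S| :=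
  \matrix_(k, l) A (enum_val k) (enum_val l).

(* characteristic polynomial f_M(x) = det(xI + M), as the formal polynomial
   of degree n whose x^k coefficient is the sum of the determinants of the
   (n-k)x(n-k) principal submatrices of M. *)
Definition st_charpoly n (M : 'M[stR]_n) : {ffun 'I_n.+1 -> stR} :=
  [ffun k : 'I_n.+1 =>
     \big[st_add/stZero]_(S : {set 'I_n} | #|S| == n - k)
        st_det (st_principal S M)].

Definition st_peval n (f : {ffun 'I_n.+1 -> stR}) (r : stR) : stR :=
  \big[st_add/stZero]_(k < n.+1) st_mul (f k) (st_pow r k).

Definition st_pevalmx n m (f : {ffun 'I_n.+1 -> stR}) (M : 'M[stR]_m)
  : 'M[stR]_m :=
  \big[@st_addmx m/st_zeromx m]_(k < n.+1) st_scalemx (f k) (st_expmx M k).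

Definition st_eigenvalue n (M : 'M[stR]_n) (l : stR) : Prop :=
  st_tanz l /\ st_ghostz (st_peval (st_charpoly M) l).

Definition st_ghostmx n (M : 'M[stR]_n) : Prop := forall i j, st_ghostz (M i j).

End Supertropical.

Arguments stZero {G}.

From HB Require Import structures.
From mathcomp Require Import all_boot all_order all_algebra all_fingroup.
From mathcomp Require Import mpoly.
From mathcomp Require Import zify.
Set Implicit Arguments. Unset Strict Implicit. Unset Printing Implicit Defensive.
Import GRing.Theory.

(* Write x |=gs y ("x ghost-surpasses y") when x = y + g for a ghost-or-zero
   g.  The heart of the proof is that every coefficient of f_{B'}, where
   B' = A^nabla B A with A non-singular, ghost-surpasses the corresponding
   coefficient of f_B, and that f_B(B) is a ghost matrix (supertropical
   Cayley-Hamilton).  The three claims of the corollary are then immediate,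
   since |=gs is compatible with sums and products, a tangible element only
   surpasses itself, and only ghosts surpass ghosts.

   Both facts are obtained by a transfer principle.  A formal signed sum is a
   list of signed monomials in the entries of generic matrices; it can be
   read as a polynomial over the integers (signs counted, so terms may
   cancel) or evaluated in the supertropical semiring (signs forgotten).  If
   two formal sums E, F give the same integer polynomial, then the
   supertropical value of E surpasses that of F as soon as the dominant part
   of F consists of monomials occurring exactly once: the extra monomials of
   E cancel in pairs and hence produce ghosts.  We apply this to the
   classical identities
     sum of principal m-minors of adj(A) B A = det(A)^m (same sum for B),
     sum_k (-1)^(n-k) c_k(B) B^k = 0 (Cayley-Hamilton),
   using, for the first one, that a tangible det(A) has a unique dominant
   permutation term. *)

Section OrderedGroup.
Variable G : ordAbGroup.
Implicit Types a b c : G.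

Lemma oag_ltxx a : oag_lt a a = false.
Proof. by rewrite /oag_lt oag_le_refl. Qed.

Lemma oag_lt_asym a b : oag_lt a b -> oag_lt b a -> False.
Proof. by rewrite /oag_lt => /andP[-> _] /andP[_ /negP]. Qed.

Lemma oag_lt_trans a b c : oag_lt a b -> oag_lt b c -> oag_lt a c.
Proof.
rewrite /oag_lt => /andP[ab nba] /andP[bc ncb]; rewrite (oag_le_trans ab bc) /=.
by apply: contra nba => ca; apply: oag_le_trans bc ca.
Qed.

Lemma oag_lt_nle a b : oag_lt a b -> ~~ oag_le b a.
Proof. by case/andP. Qed.

Lemma oag_nlt_le a b : ~~ oag_lt a b -> oag_le b a.
Proof.
rewrite /oag_lt negb_and negbK; case/orP=> // nab.
by case/orP: (oag_le_total a b) => h; [rewrite h in nab|].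
Qed.

Variant oag_cmp_spec a b : bool -> bool -> Prop :=
| OagLt of oag_lt a b : oag_cmp_spec a b true false
| OagGt of oag_lt b a : oag_cmp_spec a b false true
| OagEq of a = b : oag_cmp_spec a b false false.

Lemma oag_cmpP a b : oag_cmp_spec a b (oag_lt a b) (oag_lt b a).
Proof.
case ab: (oag_lt a b); case ba: (oag_lt b a).
- by case: (oag_lt_asym ab ba).
- exact: OagLt.
- exact: OagGt.
- by apply: OagEq; apply: oag_le_anti; rewrite !oag_nlt_le ?ab ?ba.
Qed.

Lemma oag_leD2rE a b c : oag_le (a + c)%R (b + c)%R = oag_le a b.
Proof.
apply/idP/idP => h; last exact: oag_leD2r.
by have := oag_leD2r (- c)%R h; rewrite -!addrA subrr !addr0.
Qed.

Lemma oag_ltD2r a b c : oag_lt (a + c)%R (b + c)%R = oag_lt a b.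
Proof. by rewrite /oag_lt !oag_leD2rE. Qed.

End OrderedGroup.

Ltac oag_contradiction :=
  solve [ by []
        | exfalso; eauto using oag_lt_asym, oag_lt_trans
        | exfalso; match goal with H : is_true (oag_lt ?a ?a) |- _ =>
                     by rewrite oag_ltxx in H end ].

Ltac oag_cases :=
  repeat (match goal with
    | |- context[oag_lt ?a ?b] => case: (oag_cmpP a b) => ?
    | H : ?a = ?b |- _ => subst a || subst b
    end; rewrite ?oag_ltxx /=); try oag_contradiction.

Section SemiringLaws.
Variable G : ordAbGroup.

Lemma st_addC : commutative (@st_add G).
Proof. by case=> [|a|a] [|b|b] //=; oag_cases. Qed.

Lemma st_add0r : left_id stZero (@st_add G). Proof. by case. Qed.
Lemma st_addr0 : right_id stZero (@st_add G). Proof. by case. Qed.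

Lemma st_addA : associative (@st_add G).
Proof. by case=> [|a|a] [|b|b] [|c|c] //=; oag_cases. Qed.

Lemma st_mulC : commutative (@st_mul G).
Proof. by case=> [|a|a] [|b|b] //=; rewrite addrC. Qed.

Lemma st_mulA : associative (@st_mul G).
Proof. by case=> [|a|a] [|b|b] [|c|c] //=; rewrite addrA. Qed.

Lemma st_mul1r : left_id (st_one G) (@st_mul G).
Proof. by case=> [|a|a] //=; rewrite add0r. Qed.

Lemma st_mulr1 : right_id (st_one G) (@st_mul G).
Proof. by move=> x; rewrite st_mulC st_mul1r. Qed.

Lemma st_mul0r : left_zero stZero (@st_mul G). Proof. by []. Qed.
Lemma st_mulr0 : right_zero stZero (@st_mul G). Proof. by case. Qed.

Lemma st_mulDl : left_distributive (@st_mul G) (@st_add G).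
Proof. by case=> [|a|a] [|b|b] [|c|c] //=; rewrite ?oag_ltD2r; oag_cases. Qed.

Lemma st_mulDr : right_distributive (@st_mul G) (@st_add G).
Proof. by move=> x y z; rewrite !(st_mulC x) st_mulDl. Qed.

End SemiringLaws.

HB.instance Definition _ (G : ordAbGroup) := Monoid.isComLaw.Build (stR G)
  stZero (@st_add G) (@st_addA G) (@st_addC G) (@st_add0r G).
HB.instance Definition _ (G : ordAbGroup) := Monoid.isComLaw.Build (stR G)
  (st_one G) (@st_mul G) (@st_mulA G) (@st_mulC G) (@st_mul1r G).
HB.instance Definition _ (G : ordAbGroup) :=
  Monoid.isMulLaw.Build (stR G) stZero (@st_mul G) (@st_mul0r G) (@st_mulr0 G).
HB.instance Definition _ (G : ordAbGroup) :=
  Monoid.isAddLaw.Build (stR G) (@st_mul G) (@st_add G) (@st_mulDl G) (@st_mulDr G).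

Section Powers.
Variable G : ordAbGroup.
Implicit Types x y : stR G.

Lemma st_powS x k : st_pow x k.+1 = st_mul x (st_pow x k).
Proof. by []. Qed.

Lemma st_pow_add x a b : st_pow x (a + b) = st_mul (st_pow x a) (st_pow x b).
Proof. by elim: a => [|a IH]; rewrite ?st_mul1r // addSn !st_powS IH st_mulA. Qed.

Lemma st_pow_mul x y k : st_pow (st_mul x y) k = st_mul (st_pow x k) (st_pow y k).
Proof.
elim: k => [|k IH]; first by rewrite st_mul1r.
by rewrite !st_powS IH -!st_mulA; congr st_mul; rewrite !st_mulA (st_mulC y).
Qed.

Lemma st_pow_one k : st_pow (st_one G) k = st_one G.
Proof. by elim: k => [|k IH] //; rewrite st_powS IH st_mul1r. Qed.

Lemma st_pow_tangible c k : st_tangible (st_pow (stTan c) k : stR G).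
Proof. by elim: k => [|k IH] //; rewrite st_powS; case: (st_pow _ k) IH. Qed.

End Powers.

Section GhostSurpassing.
Variable G : ordAbGroup.
Local Notation R := (stR G).
Implicit Types x y z : R.

Definition gsurp x y := exists2 g, st_ghostz g & x = st_add y g.

Definition nu_le x y : bool :=
  match x, y with
  | stZero, _ => true
  | _, stZero => false
  | (stTan a | stGh a), (stTan b | stGh b) => oag_le a b
  end.

Lemma ghostzD x y : st_ghostz x -> st_ghostz y -> st_ghostz (st_add x y).
Proof.
by case: x => [|a|a] // _; case: y => [|b|b] //= _; case: (oag_lt a b); case: (oag_lt b a).
Qed.

Lemma ghostzMl x y : st_ghostz x -> st_ghostz (st_mul x y).
Proof. by case: x => [|a|a] //; case: y. Qed.

Lemma ghostzMr x y : st_ghostz y -> st_ghostz (st_mul x y).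
Proof. by rewrite st_mulC; apply: ghostzMl. Qed.

Lemma gsurp_refl x : gsurp x x.
Proof. by exists stZero; rewrite ?st_addr0. Qed.

Lemma gsurp_trans x y z : gsurp x y -> gsurp y z -> gsurp x z.
Proof.
case=> g gG ->; case=> h hG ->; exists (st_add h g); first exact: ghostzD.
by rewrite st_addA.
Qed.

Lemma gsurpD x y x' y' :
  gsurp x y -> gsurp x' y' -> gsurp (st_add x x') (st_add y y').
Proof.
case=> g gG ->; case=> h hG ->; exists (st_add g h); first exact: ghostzD.
by rewrite -!st_addA (st_addA g) (st_addC g) -!st_addA.
Qed.

Lemma gsurpM x y x' y' :
  gsurp x y -> gsurp x' y' -> gsurp (st_mul x x') (st_mul y y').
Proof.
case=> g gG ->; case=> h hG ->.
exists (st_add (st_mul y h) (st_add (st_mul g y') (st_mul g h))).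
  by apply: ghostzD; [apply: ghostzMr|apply: ghostzD; apply: ghostzMl].
by rewrite st_mulDl !st_mulDr !st_addA.
Qed.

Lemma gsurp_big (I : Type) (r : seq I) (P : pred I) (F F' : I -> R) :
  (forall i, P i -> gsurp (F i) (F' i)) ->
  gsurp (\big[@st_add G/stZero]_(i <- r | P i) F i)
        (\big[@st_add G/stZero]_(i <- r | P i) F' i).
Proof. by move=> H; apply: (big_ind2 gsurp) => //; [exact: gsurp_refl|exact: gsurpD]. Qed.

Lemma gsurp_ghostz x y : gsurp x y -> st_ghostz y -> st_ghostz x.
Proof. by case=> g gG -> yG; apply: ghostzD. Qed.

Lemma gsurp_tanz x y : gsurp x y -> st_tanz x -> x = y.
Proof.
case=> [[|b|b]] // _ ->; first by rewrite st_addr0.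
by case: y => [|a|a] //=; case: (oag_lt a b); case: (oag_lt b a).
Qed.

Lemma nu_le_refl x : nu_le x x.
Proof. by case: x => //= a; exact: oag_le_refl. Qed.

Lemma nu_le_trans y x z : nu_le x y -> nu_le y z -> nu_le x z.
Proof.
by case: x => [|a|a] //; case: y => [|b|b] //; case: z => [|c|c] //=; apply: oag_le_trans.
Qed.

Lemma nu_le_addl x y : nu_le x (st_add x y).
Proof.
case: x => [|a|a] //; case: y => [|b|b] /=; rewrite ?oag_le_refl //;
  by case: (oag_cmpP a b) => [/andP[]| |] //=; rewrite oag_le_refl.
Qed.

Lemma nu_le_add x y z : nu_le x z -> nu_le y z -> nu_le (st_add x y) z.
Proof.
by case: x => [|a|a] //; case: y => [|b|b] //; case: z => [|c|c] //=; case: (oag_cmpP a b).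
Qed.

Lemma nu_le_mul x y x' y' : nu_le x y -> nu_le x' y' -> nu_le (st_mul x x') (st_mul y y').
Proof.
case: x => [|a|a]; case: y => [|b|b]; case: x' => [|c|c]; case: y' => [|d|d] //= ab cd.
all: apply: (oag_le_trans (oag_leD2r c ab)); rewrite ![(b + _)%R]addrC; exact: oag_leD2r.
Qed.

Lemma nu_le_big (I : Type) (r : seq I) (P : pred I) (F : I -> R) z :
  (forall i, P i -> nu_le (F i) z) -> nu_le (\big[@st_add G/stZero]_(i <- r | P i) F i) z.
Proof. by move=> H; apply: (big_ind (nu_le^~ z)) => // u v; apply: nu_le_add. Qed.

Lemma nu_le_term (I : eqType) (r : seq I) (P : pred I) (F : I -> R) i :
  i \in r -> P i -> nu_le (F i) (\big[@st_add G/stZero]_(j <- r | P j) F j).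
Proof. by move=> ir Pi; rewrite (big_rem i) //= Pi; exact: nu_le_addl. Qed.

Lemma st_addxx_ghost x : st_ghostz (st_add x x).
Proof. by case: x => [|a|a] //=; rewrite oag_ltxx. Qed.

Lemma gsurp_add_nu_le x y : nu_le y x -> gsurp (st_add x y) x.
Proof.
case: x => [|a|a]; case: y => [|b|b] //= ba; try exact: gsurp_refl.
all: case: (oag_cmpP a b) => [/andP[_ /negP]//|_|->]; first exact: gsurp_refl.
all: by exists (stGh b) => //=; rewrite oag_ltxx.
Qed.

Lemma ghostz_add_nu_le x y : st_ghostz x -> nu_le y x -> st_ghostz (st_add x y).
Proof.
case: x => [|a|a] //; case: y => [|b|b] //= _ ba.
all: by case: (oag_cmpP a b) => // /andP[_ /negP].
Qed.

Lemma iterop_ghost (c : nat) x : (1 < c)%N -> st_ghostz (iterop c (@st_add G) x stZero).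
Proof.
case: c => [|[|c]] // _; elim: c => [|c IH] /=; first exact: st_addxx_ghost.
by rewrite st_addC; apply: ghostz_add_nu_le => //; exact: nu_le_addl.
Qed.

Lemma iterop_gsurp (c : nat) x : (0 < c)%N -> gsurp (iterop c (@st_add G) x stZero) x.
Proof.
case: c => [|[|c]] // _; first exact: gsurp_refl.
have vG : st_ghostz (iterop c.+2 (@st_add G) x stZero) by apply: iterop_ghost.
have xv : nu_le x (iterop c.+2 (@st_add G) x stZero) by exact: nu_le_addl.
move: (iterop _ _ _ _) vG xv => v vG xv; exists v => //.
rewrite st_addC; case: v vG xv => [|b|b] //; case: x => [|a|a] //= _ ab.
all: by case: (oag_cmpP b a) => // /andP[_ /negP].
Qed.

End GhostSurpassing.

(* Formal signed sums over kv variables: lists of monomials with a sign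
   (true meaning "negative").  Addition is concatenation and multiplication
   is the list of all pairwise products, so no cancellation ever happens. *)
Section FormalSums.
Variable kv : nat.
Local Notation mon := 'X_{1..kv}.

Definition fsum := seq (mon * bool).
Definition fadd (E F : fsum) : fsum := E ++ F.
Definition fmul (E F : fsum) : fsum :=
  [seq (mnm_add t.1 u.1, t.2 (+) u.2) | t <- E, u <- F].
Definition fzero : fsum := [::].
Definition fsign (b : bool) : fsum := [:: (mnm0, b)].
Definition fone : fsum := fsign false.
Definition fpow (E : fsum) k : fsum := iter k (fmul E) fone.

Definition fmult (E : fsum) (m : mon) : nat := count (fun t => t.1 == m) E.

Lemma fmult_fadd E F m : fmult (fadd E F) m = (fmult E m + fmult F m)%N.
Proof. exact: count_cat. Qed.

Lemma fmult_big (I : Type) (r : seq I) (P : pred I) (F : I -> fsum) m :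
  fmult (\big[fadd/fzero]_(i <- r | P i) F i) m = (\sum_(i <- r | P i) fmult (F i) m)%N.
Proof. by apply: (big_morph (fmult^~ m)) => // E F'; apply: fmult_fadd. Qed.

Lemma fmult_fmul (X Y : fsum) m :
  fmult (fmul X Y) m = (\sum_(x <- X) count (fun y => mnm_add x.1 y.1 == m) Y)%N.
Proof.
elim: X => [|x X IH]; first by rewrite big_nil.
by rewrite big_cons -IH /fmult /fmul /= count_cat count_map.
Qed.

Lemma mem_fmul (X Y : fsum) t : t \in fmul X Y ->
  exists2 x, x \in X & exists2 y, y \in Y & t.1 = mnm_add x.1 y.1.
Proof. by case/allpairsPdep => x [y [xX yY ->]]; exists x => //; exists y. Qed.

Lemma fmult_gt0_mem (E : fsum) m : (0 < fmult E m)%N -> m \in map fst E.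
Proof. by rewrite /fmult -has_count => /hasP[t tE /eqP <-]; exact: map_f. Qed.

Local Open Scope ring_scope.

Definition fsum_poly (E : fsum) : {mpoly int[kv]} :=
  \sum_(t <- E) ((-1) ^+ t.2 *: 'X_[t.1]).

Lemma fsum_poly_fadd E F : fsum_poly (fadd E F) = fsum_poly E + fsum_poly F.
Proof. by rewrite /fsum_poly big_cat. Qed.

Lemma fsum_poly_fzero : fsum_poly fzero = 0.
Proof. by rewrite /fsum_poly big_nil. Qed.

Lemma fsum_poly_fsign b : fsum_poly (fsign b) = (-1) ^+ b.
Proof. by rewrite /fsum_poly big_seq1 /= mpolyX0; case: b; rewrite ?expr0 ?expr1 ?scale1r ?scaleN1r. Qed.

Lemma fsum_poly_fmul E F : fsum_poly (fmul E F) = fsum_poly E * fsum_poly F.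
Proof.
rewrite /fsum_poly /fmul big_allpairs_dep big_distrl /=; apply: eq_bigr => t _.
rewrite big_distrr /=; apply: eq_bigr => u _.
by rewrite mpolyXD signr_addb -!scalerAl -!scalerAr scalerA mulrC.
Qed.

Lemma fsum_poly_big (I : Type) (r : seq I) (P : pred I) (F : I -> fsum) :
  fsum_poly (\big[fadd/fzero]_(i <- r | P i) F i) = \sum_(i <- r | P i) fsum_poly (F i).
Proof. exact: (big_morph fsum_poly fsum_poly_fadd fsum_poly_fzero). Qed.

Lemma fsum_poly_bigM (I : Type) (r : seq I) (P : pred I) (F : I -> fsum) :
  fsum_poly (\big[fmul/fone]_(i <- r | P i) F i) = \prod_(i <- r | P i) fsum_poly (F i).
Proof. exact: (big_morph fsum_poly fsum_poly_fmul (fsum_poly_fsign false)). Qed.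

Lemma fsum_poly_fpow E k : fsum_poly (fpow E k) = fsum_poly E ^+ k.
Proof.
elim: k => [|k IH]; first exact: fsum_poly_fsign.
by rewrite /fpow iterS -/(fpow E k) fsum_poly_fmul IH exprS.
Qed.

Lemma fsum_poly_coef (E : fsum) m :
  (fsum_poly E)@_m = \sum_(t <- E | t.1 == m) (-1) ^+ t.2.
Proof.
rewrite /fsum_poly raddf_sum [RHS]big_mkcond /=; apply: eq_bigr => t _.
by rewrite mcoeffZ mcoeffX; case: eqP => _; rewrite ?mulr1 ?mulr0.
Qed.

Lemma fsum_poly_coef_mult1 (E : fsum) m : fmult E m = 1%N -> (fsum_poly E)@_m != 0.
Proof.
rewrite fsum_poly_coef /fmult -big_filter -size_filter.
by case: (filter _ E) => [|t [|]] //= _; rewrite big_seq1 signr_eq0.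
Qed.

Lemma fmult_gt0 (E : fsum) m : (fsum_poly E)@_m != 0 -> (0 < fmult E m)%N.
Proof.
rewrite lt0n; apply: contra => /eqP.
rewrite fsum_poly_coef /fmult -big_filter => /eqP; rewrite -size_filter size_eq0 => /eqP ->.
by rewrite big_nil.
Qed.

End FormalSums.

Section FormalEval.
Variables (G : ordAbGroup) (kv : nat) (val : 'I_kv -> stR G).
Local Notation mon := 'X_{1..kv}.

Definition mon_eval (m : mon) : stR G :=
  \big[@st_mul G/st_one G]_(i < kv) st_pow (val i) (m i).
Definition fsum_eval (E : fsum kv) : stR G :=
  \big[@st_add G/stZero]_(t <- E) mon_eval t.1.

Lemma mon_eval0 : mon_eval mnm0 = st_one G.
Proof. by rewrite /mon_eval big1 // => i _; rewrite mnm0E. Qed.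

Lemma mon_evalD m1 m2 : mon_eval (mnm_add m1 m2) = st_mul (mon_eval m1) (mon_eval m2).
Proof. by rewrite /mon_eval -big_split /=; apply: eq_bigr => i _; rewrite mnmDE st_pow_add. Qed.

Lemma mon_eval1 i : mon_eval (mnm1 i) = val i.
Proof.
rewrite /mon_eval (bigD1 i) //= big1 ?mnm1E ?eqxx ?st_mulr1 /st_pow /= ?st_mulr1 //.
by move=> j /negbTE ji; rewrite mnm1E eq_sym ji.
Qed.

Lemma fsum_eval_fadd E F : fsum_eval (fadd E F) = st_add (fsum_eval E) (fsum_eval F).
Proof. by rewrite /fsum_eval big_cat. Qed.

Lemma fsum_eval_fzero : fsum_eval (fzero kv) = stZero.
Proof. by rewrite /fsum_eval big_nil. Qed.

Lemma fsum_eval_fsign b : fsum_eval (fsign kv b) = st_one G.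
Proof. by rewrite /fsum_eval big_seq1 mon_eval0. Qed.

Lemma fsum_eval_fmul E F : fsum_eval (fmul E F) = st_mul (fsum_eval E) (fsum_eval F).
Proof.
rewrite /fsum_eval /fmul big_allpairs_dep big_distrl /=; apply: eq_bigr => t _.
by rewrite big_distrr /=; apply: eq_bigr => u _; rewrite mon_evalD.
Qed.

Lemma fsum_eval_big (I : Type) (r : seq I) (P : pred I) (F : I -> fsum kv) :
  fsum_eval (\big[@fadd kv/fzero kv]_(i <- r | P i) F i) =
  \big[@st_add G/stZero]_(i <- r | P i) fsum_eval (F i).
Proof. exact: (big_morph fsum_eval fsum_eval_fadd fsum_eval_fzero). Qed.

Lemma fsum_eval_bigM (I : Type) (r : seq I) (P : pred I) (F : I -> fsum kv) :
  fsum_eval (\big[@fmul kv/fone kv]_(i <- r | P i) F i) =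
  \big[@st_mul G/st_one G]_(i <- r | P i) fsum_eval (F i).
Proof. exact: (big_morph fsum_eval fsum_eval_fmul (fsum_eval_fsign false)). Qed.

Lemma fsum_eval_fpow E k : fsum_eval (fpow E k) = st_pow (fsum_eval E) k.
Proof.
elim: k => [|k IH]; first exact: fsum_eval_fsign.
by rewrite /fpow iterS -/(fpow E k) fsum_eval_fmul IH.
Qed.

Lemma mon_eval_nu_le (F : fsum kv) m : m \in map fst F -> nu_le (mon_eval m) (fsum_eval F).
Proof. by move=> mF; rewrite /fsum_eval -(big_map fst xpredT mon_eval); exact: nu_le_term. Qed.

Lemma fsum_eval_group (E : fsum kv) :
  fsum_eval E = \big[@st_add G/stZero]_(m <- undup (map fst E))
                   iterop (fmult E m) (@st_add G) (mon_eval m) stZero.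
Proof.
rewrite /fsum_eval -(big_map fst xpredT mon_eval) -big_undup_iterop_count.
by apply: eq_bigr => m _; rewrite count_map.
Qed.

End FormalEval.

Section Transfer.
Variables (G : ordAbGroup) (kv : nat) (val : 'I_kv -> stR G).
Local Notation mon_eval := (mon_eval val).
Local Notation fsum_eval := (fsum_eval val).
Local Notation "\ssum_ ( i <- r | P ) F" := (\big[@st_add G/stZero]_(i <- r | P) F)
  (at level 41, F at level 41, i, r at level 50).

(* Indeed the monomials of D survive in E; a
   monomial repeated in E contributes a ghost; any other monomial of E occurs
   in F and is therefore nu-dominated by the value of F. *)
Lemma transfer (E F : fsum kv) (D : seq 'X_{1..kv}) :
  fsum_poly E = fsum_poly F -> uniq D ->
  (forall m, m \in D -> fmult F m = 1%N) ->
  \big[@st_add G/stZero]_(m <- D) mon_eval m = fsum_eval F ->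
  gsurp (fsum_eval E) (fsum_eval F).
Proof.
move=> eEF uD DF DS; set U := undup (map fst E).
have inU m : m \in U -> (0 < fmult E m)%N.
  by rewrite mem_undup => /mapP[t tE ->]; rewrite /fmult -has_count; apply/hasP; exists t.
have DE m : m \in D -> (0 < fmult E m)%N.
  by move=> mD; apply: fmult_gt0; rewrite eEF fsum_poly_coef_mult1 // DF.
have DU : perm_eq D [seq m <- U | m \in D].
  apply: uniq_perm => //; first by rewrite filter_uniq // undup_uniq.
  move=> m; rewrite mem_filter; apply/idP/andP => [mD|[]//]; split => //.
  by rewrite mem_undup; apply: fmult_gt0_mem; apply: DE.
pose simple m := if fmult E m == 1%N then mon_eval m else stZero.
have inD : gsurp (\ssum_(m <- U | m \in D) iterop (fmult E m) (@st_add G) (mon_eval m) stZero)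
                 (fsum_eval F).
  rewrite -DS (perm_big _ DU) big_filter.
  by apply: gsurp_big => m mD; apply: iterop_gsurp; apply: DE.
have outD : gsurp (\ssum_(m <- U | m \notin D) iterop (fmult E m) (@st_add G) (mon_eval m) stZero)
                  (\ssum_(m <- U | m \notin D) simple m).
  rewrite [X in gsurp X _]big_seq_cond [X in gsurp _ X]big_seq_cond.
  apply: gsurp_big => m /andP[mU _]; rewrite /simple; case: eqP => [->|c1].
    exact: gsurp_refl.
  exists (iterop (fmult E m) (@st_add G) (mon_eval m) stZero) => //.
  by apply: iterop_ghost; move: (inU m mU) c1; case: (fmult E m) => [|[|]].
have simple_le : nu_le (\ssum_(m <- U | m \notin D) simple m) (fsum_eval F).
  apply: nu_le_big => m _; rewrite /simple; case: eqP => // c1.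
  apply: mon_eval_nu_le; apply: fmult_gt0_mem; apply: fmult_gt0.
  by rewrite -eEF fsum_poly_coef_mult1.
rewrite fsum_eval_group -/U (bigID (fun m => m \in D)) /=.
apply: gsurp_trans (gsurpD inD outD) _; exact: gsurp_add_nu_le.
Qed.

Lemma transfer0 (E : fsum kv) : fsum_poly E = 0%R -> st_ghostz (fsum_eval E).
Proof.
move=> eE; have [g gG ->] : gsurp (fsum_eval E) (fsum_eval (fzero kv)).
  by apply: (transfer (D := [::])); rewrite ?fsum_poly_fzero ?big_nil ?fsum_eval_fzero.
by rewrite fsum_eval_fzero st_add0r.
Qed.

End Transfer.

(* Classical identities over commutative rings, phrased through the principal
   minors det(M[S,S]), written as sums over the permutations supported on S. *)
Section PrincipalMinors.
Local Open Scope ring_scope.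
Variable R : comNzRingType.

Definition pminor n (S : {set 'I_n}) (M : 'M[R]_n) : R :=
  \sum_(s : 'S_n | perm_on S s) (-1) ^+ s * \prod_(i in S) M i (s i).

Lemma det_diag_add n (a : 'I_n -> R) (M : 'M[R]_n) :
  \det (\matrix_(i, j) ((i == j)%:R * a i + M i j)) =
  \sum_(S : {set 'I_n}) (\prod_(i in ~: S) a i) * pminor S M.
Proof.
rewrite /determinant.
transitivity (\sum_(s : 'S_n) \sum_(J in {set 'I_n}) (-1) ^+ s *
   \prod_i (if i \in J then (i == s i)%:R * a i else M i (s i))).
  apply: eq_bigr => s _; rewrite -big_distrr -bigA_distr /=; congr (_ * _).
  by apply: eq_bigr => i _; rewrite mxE.
rewrite exchange_big (reindex_inj (@setC_inj _)) /=; apply: eq_bigr => S _.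
rewrite /pminor big_distrr /= (bigID (fun s : 'S_n => perm_on S s)) /=.
rewrite [X in _ + X]big1 ?addr0.
  apply: eq_bigr => s sS; rewrite [RHS]mulrCA; congr (_ * _).
  rewrite (bigID (fun i => i \in ~: S)) /=; congr (_ * _).
    by apply: eq_bigr => i iS; rewrite iS (out_perm sS) ?eqxx ?mul1r // -in_setC.
  apply: eq_big => [i|i iS]; first by rewrite in_setC negbK.
  by rewrite (negbTE iS).
move=> s nsS.
have [x /andP[sx xS]]: exists x, (s x != x) && (x \in ~: S).
  apply/existsP; move: nsS; rewrite /perm_on; apply: contraR.
  rewrite negb_exists => /forallP H; apply/subsetP => y; rewrite inE => sy.
  by move: (H y); rewrite sy /= in_setC negbK.
by rewrite (bigD1 x) //= xS eq_sym (negbTE sx) !mul0r mulr0.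
Qed.

Lemma pminor_scale n (S : {set 'I_n}) c (M : 'M[R]_n) :
  pminor S (c *: M) = c ^+ #|S| * pminor S M.
Proof.
rewrite /pminor big_distrr; apply: eq_bigr => s _; rewrite [RHS]mulrCA; congr (_ * _).
by rewrite -prodr_const -big_split /=; apply: eq_bigr => i _; rewrite mxE.
Qed.

End PrincipalMinors.

Lemma pminor_map (R1 R2 : comNzRingType) (f : {rmorphism R1 -> R2}) n
    (S : {set 'I_n}) (M : 'M[R1]_n) :
  pminor S (map_mx f M) = f (pminor S M).
Proof.
rewrite /pminor rmorph_sum; apply: eq_bigr => s _.
by rewrite rmorphM rmorph_sign rmorph_prod; congr (_ * _)%R; apply: eq_bigr => i _; rewrite mxE.
Qed.

Lemma sum_by_card (V : nmodType) n (F : {set 'I_n} -> V) :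
  (\sum_(S : {set 'I_n}) F S =
   \sum_(k < n.+1) \sum_(S : {set 'I_n} | #|S| == (n - k)%N) F S)%R.
Proof.
rewrite (partition_big (fun S : {set 'I_n} => (inord (n - #|S|) : 'I_n.+1)) xpredT) //.
apply: eq_bigr => k _; apply: eq_bigl => S.
have hS : (#|S| <= n)%N by rewrite -[X in (_ <= X)%N]card_ord; apply: max_card.
have hk : (k <= n)%N by rewrite -ltnS.
rewrite -val_eqE /= inordK ?ltnS ?leq_subr //.
by apply/eqP/eqP; move: (#|S|) hS => c hc; move: (nat_of_ord k) hk => kk hkk; lia.
Qed.

Section ConjugateMinors.
Local Open Scope ring_scope.
Variable R : idomainType.

Lemma pminor_sum_coef n (M : 'M[R]_n) m :
  (\det (1%:M + 'X *: map_mx polyC M))`_m = \sum_(S : {set 'I_n} | #|S| == m) pminor S M.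
Proof.
have -> : 1%:M + 'X *: map_mx polyC M =
          \matrix_(i, j) ((i == j)%:R * 1 + ('X *: map_mx polyC M) i j).
  by apply/matrixP => i j; rewrite !mxE mulr1.
rewrite det_diag_add coef_sum [RHS]big_mkcond /=; apply: eq_bigr => S _.
rewrite big1 ?mul1r // pminor_scale (pminor_map (@polyC R)) mulrC mul_polyC coefZ coefXn.
by rewrite eq_sym; case: eqP; rewrite ?mulr1 ?mulr0.
Qed.

(* For det A != 0: sum of principal m-minors of adj(A) B A equals
   det(A)^m times that of B, since A (I + x adj(A) B A) = (I + x det(A) B) A. *)
Lemma pminor_sum_conj n (A B : 'M[R]_n) m : \det A != 0 ->
  \sum_(S : {set 'I_n} | #|S| == m) pminor S (\adj A *m B *m A) =
  (\det A) ^+ m * \sum_(S : {set 'I_n} | #|S| == m) pminor S B.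
Proof.
move=> dA; set d := \det A; pose P (M : 'M[R]_n) := map_mx (@polyC R) M.
have key : P A *m (1%:M + 'X *: P (\adj A *m B *m A)) = (1%:M + 'X *: P (d *: B)) *m P A.
  rewrite mulmxDr mulmxDl mulmx1 mul1mx; congr (_ + _).
  rewrite -scalemxAr -scalemxAl; congr (_ *: _).
  by rewrite /P -!map_mxM !mulmxA mul_mx_adj mul_scalar_mx -scalemxAl.
have := congr1 determinant key; rewrite !det_mulmx /P det_map_mx mulrC.
move/mulIf; rewrite polyC_eq0 => /(_ dA) /(congr1 (fun p : {poly R} => p`_m)).
rewrite !pminor_sum_coef => ->; rewrite big_distrr /=; apply: eq_bigr => S /eqP <-.
by rewrite pminor_scale.
Qed.

End ConjugateMinors.

Section CayleyHamilton.
Local Open Scope ring_scope.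
Variable R : comNzRingType.

Lemma cayley_hamilton_pminor n (B : 'M[R]_n) :
  \sum_(k < n.+1) ((-1) ^+ (n - k) *
     \sum_(S : {set 'I_n} | #|S| == (n - k)%N) pminor S B) *: B ^+ k = 0.
Proof.
case: n B => [|n] B; first by apply/matrixP => [[]].
have := Cayley_Hamilton B.
have -> : char_poly B = \sum_(S : {set 'I_n.+1})
                          'X ^+ (n.+1 - #|S|) * ((-1) ^+ #|S| * pminor S B)%:P.
  rewrite /char_poly /char_poly_mx.
  have -> : 'X%:M - map_mx polyC B =
            \matrix_(i, j) ((i == j)%:R * 'X + (map_mx polyC (- B)) i j).
    by apply/matrixP => i j; rewrite !mxE raddfN /= mulr_natl.
  rewrite det_diag_add; apply: eq_bigr => S _.
  rewrite prodr_const cardsCs setCK card_ord; congr (_ * _).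
  by rewrite pminor_map -(scaleN1r B) pminor_scale.
move=> H; rewrite -[X in _ = X]H rmorph_sum /= sum_by_card; apply: eq_bigr => k _.
rewrite big_distrr /= scaler_suml; apply: eq_bigr => S /eqP hS.
rewrite rmorphM rmorphXn /= horner_mx_X horner_mx_C -mulmxE mul_mx_scalar hS.
by rewrite subKn -1?ltnS // scalerA mulrA.
Qed.

End CayleyHamilton.

(* Permutations of the principal submatrix on S are the permutations of 'I_n
   supported on S: a permutation t of 'I_#|S| extends to 'I_n by acting as t
   on S, through its enumeration, and as the identity elsewhere. *)
Section ExtendPerm.
Variables (n : nat) (S : {set 'I_n}).
Local Notation psi := (@enum_val _ (mem S)).

Lemma enum_val_onto x : x \in S -> exists k, psi k = x.
Proof. by move=> xS; exists (enum_rank_in xS x); exact: enum_rankK_in. Qed.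

Definition extend_fun (t : 'S_#|S|) (x : 'I_n) : 'I_n :=
  if [pick k | psi k == x] is Some k then psi (t k) else x.

Lemma extend_fun_val t k : extend_fun t (psi k) = psi (t k).
Proof.
by rewrite /extend_fun; case: pickP => [k' /eqP /enum_val_inj -> //|/(_ k)]; rewrite eqxx.
Qed.

Lemma extend_fun_inj t : {in S &, injective (extend_fun t)}.
Proof.
move=> x y /enum_val_onto[k <-] /enum_val_onto[k' <-]; rewrite !extend_fun_val.
by move/enum_val_inj/perm_inj ->.
Qed.

Lemma extend_fun_sub t : [set extend_fun t x | x in S] \subset S.
Proof.
apply/subsetP => y /imsetP[x /enum_val_onto[k <-] ->].
by rewrite extend_fun_val; exact: enum_valP.
Qed.

Definition extend_perm (t : 'S_#|S|) : 'S_n :=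
  perm_in (@extend_fun_inj t) (@extend_fun_sub t).

Lemma extend_perm_val t k : extend_perm t (psi k) = psi (t k).
Proof. by rewrite /extend_perm perm_inE ?extend_fun_val // enum_valP. Qed.

Lemma extend_perm_inj : injective extend_perm.
Proof.
by move=> t1 t2 e; apply/permP => k; apply: enum_val_inj; rewrite -!extend_perm_val e.
Qed.

Lemma extend_perm_onto s : perm_on S s -> exists t, extend_perm t = s.
Proof.
move=> sS.
pose g (k : 'I_#|S|) := if [pick k' | psi k' == s (psi k)] is Some k' then k' else k.
have gP k : psi (g k) = s (psi k).
  rewrite /g; case: pickP => [k' /eqP //|].
  have sk : s (psi k) \in S by rewrite (perm_closed _ sS) enum_valP.
  have [k' ek'] := enum_val_onto sk.
  by move/(_ k'); rewrite ek' eqxx.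
have ginj : injective g.
  by move=> k1 k2 e; apply: enum_val_inj; apply: (@perm_inj _ s); rewrite -!gP e.
exists (perm ginj); apply/permP => x; case: (boolP (x \in S)) => xS.
  by have [k <-] := enum_val_onto xS; rewrite extend_perm_val permE gP.
by rewrite /extend_perm (out_perm (perm_in_on _ _) xS) (out_perm sS xS).
Qed.

Lemma big_perm_on (T : Type) (idx : T) (op : Monoid.com_law idx) (F : 'S_n -> T) :
  \big[op/idx]_(s : 'S_n | perm_on S s) F s = \big[op/idx]_(t : 'S_#|S|) F (extend_perm t).
Proof.
transitivity (\big[op/idx]_(s in [set extend_perm t | t in [set: 'S_#|S|]]) F s).
  apply: eq_bigl => s; apply/idP/imsetP => [/extend_perm_onto[t <-]|[t _ ->]].
    by exists t; rewrite ?inE.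
  exact: perm_in_on.
by rewrite big_imset /=; [apply: eq_bigl => t; rewrite inE|move=> x y _ _ /extend_perm_inj].
Qed.

End ExtendPerm.

Lemma st_det_principal (G : ordAbGroup) n (S : {set 'I_n}) (M : 'M[stR G]_n) :
  st_det (st_principal S M) =
  \big[@st_add G/stZero]_(s : 'S_n | perm_on S s) \big[@st_mul G/st_one G]_(i in S) M i (s i).
Proof.
rewrite big_perm_on /st_det; apply: congr_big => // t _.
by rewrite [RHS]big_enum_val; apply: eq_bigr => k _; rewrite mxE extend_perm_val.
Qed.

Section FormalMatrices.
Variable kv : nat.
Local Notation fsum := (fsum kv).
Local Notation fadd := (@fadd kv).
Local Notation fmul := (@fmul kv).
Local Notation fzero := (fzero kv).
Local Notation fone := (fone kv).
Local Notation fsign := (fsign kv).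

Definition fdet m (M : 'M[fsum]_m) : fsum :=
  \big[fadd/fzero]_(s : 'S_m) fmul (fsign (odd_perm s)) (\big[fmul/fone]_(i < m) M i (s i)).
Definition fadj m (M : 'M[fsum]_m) : 'M[fsum]_m :=
  \matrix_(i, j) fmul (fsign (odd (j + i))) (fdet (row' j (col' i M))).
Definition fmulmx m (M N : 'M[fsum]_m) : 'M[fsum]_m :=
  \matrix_(i, j) \big[fadd/fzero]_(l < m) fmul (M i l) (N l j).
Definition fpminor m (S : {set 'I_m}) (M : 'M[fsum]_m) : fsum :=
  \big[fadd/fzero]_(s : 'S_m | perm_on S s)
     fmul (fsign (odd_perm s)) (\big[fmul/fone]_(i in S) M i (s i)).
Definition fexpmx m (M : 'M[fsum]_m) k : 'M[fsum]_m :=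
  iter k (fmulmx M) (\matrix_(i, j) (if i == j then fone else fzero))%R.

Section SupertropicalReading.
Variables (G : ordAbGroup) (val : 'I_kv -> stR G).
Local Notation fsum_eval := (fsum_eval val).
Definition mx_eval m (M : 'M[fsum]_m) : 'M[stR G]_m := map_mx fsum_eval M.

Lemma fsum_eval_fdet m (M : 'M[fsum]_m) : fsum_eval (fdet M) = st_det (mx_eval M).
Proof.
rewrite /fdet fsum_eval_big /st_det; apply: eq_bigr => s _.
rewrite fsum_eval_fmul fsum_eval_fsign st_mul1r fsum_eval_bigM.
by apply: eq_bigr => i _; rewrite mxE.
Qed.

Lemma mx_eval_fadj m (M : 'M[fsum]_m) : mx_eval (fadj M) = st_adj (mx_eval M).
Proof.
apply/matrixP => i j; rewrite !mxE fsum_eval_fmul fsum_eval_fsign st_mul1r fsum_eval_fdet.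
by congr st_det; apply/matrixP => k l; rewrite !mxE.
Qed.

Lemma mx_eval_fmulmx m (M N : 'M[fsum]_m) : mx_eval (fmulmx M N) = st_mulmx (mx_eval M) (mx_eval N).
Proof.
apply/matrixP => i j; rewrite !mxE fsum_eval_big.
by apply: eq_bigr => l _; rewrite fsum_eval_fmul !mxE.
Qed.

Lemma fsum_eval_fpminor m (S : {set 'I_m}) (M : 'M[fsum]_m) :
  fsum_eval (fpminor S M) = st_det (st_principal S (mx_eval M)).
Proof.
rewrite st_det_principal /fpminor fsum_eval_big; apply: eq_bigr => s _.
rewrite fsum_eval_fmul fsum_eval_fsign st_mul1r fsum_eval_bigM.
by apply: eq_bigr => i _; rewrite mxE.
Qed.

Lemma mx_eval_fexpmx m (M : 'M[fsum]_m) k : mx_eval (fexpmx M k) = st_expmx (mx_eval M) k.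
Proof.
elim: k => [|k IH].
  apply/matrixP => i j; rewrite !mxE.
  by case: eqP => _; rewrite ?fsum_eval_fsign ?fsum_eval_fzero.
by rewrite /fexpmx iterS -/(fexpmx M k) mx_eval_fmulmx IH.
Qed.

End SupertropicalReading.

Local Open Scope ring_scope.
Definition mx_poly m (M : 'M[fsum]_m) : 'M[{mpoly int[kv]}]_m := map_mx (@fsum_poly kv) M.

Lemma fsum_poly_fdet m (M : 'M[fsum]_m) : fsum_poly (fdet M) = \det (mx_poly M).
Proof.
rewrite /fdet fsum_poly_big /determinant; apply: eq_bigr => s _.
rewrite fsum_poly_fmul fsum_poly_fsign fsum_poly_bigM; congr (_ * _).
by apply: eq_bigr => i _; rewrite mxE.
Qed.

Lemma mx_poly_fadj m (M : 'M[fsum]_m) : mx_poly (fadj M) = \adj (mx_poly M).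
Proof.
apply/matrixP => i j; rewrite !mxE fsum_poly_fmul fsum_poly_fsign fsum_poly_fdet.
by rewrite /cofactor signr_odd; congr (_ * \det _); apply/matrixP => k l; rewrite !mxE.
Qed.

Lemma mx_poly_fmulmx m (M N : 'M[fsum]_m) : mx_poly (fmulmx M N) = mx_poly M *m mx_poly N.
Proof.
apply/matrixP => i j; rewrite !mxE fsum_poly_big.
by apply: eq_bigr => l _; rewrite fsum_poly_fmul !mxE.
Qed.

Lemma fsum_poly_fpminor m (S : {set 'I_m}) (M : 'M[fsum]_m) :
  fsum_poly (fpminor S M) = pminor S (mx_poly M).
Proof.
rewrite /fpminor /pminor fsum_poly_big; apply: eq_bigr => s _.
rewrite fsum_poly_fmul fsum_poly_fsign fsum_poly_bigM; congr (_ * _).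
by apply: eq_bigr => i _; rewrite mxE.
Qed.

Lemma mx_poly_fexpmx m (M : 'M[fsum]_m) k : mx_poly (fexpmx M k) = (mx_poly M) ^+ k.
Proof.
elim: k => [|k IH].
  apply/matrixP => i j; rewrite !mxE.
  by case: eqP => _; rewrite ?fsum_poly_fsign ?fsum_poly_fzero.
by rewrite /fexpmx iterS -/(fexpmx M k) mx_poly_fmulmx IH exprS mulmxE.
Qed.

End FormalMatrices.

Section SupportedSums.
Variables (kv : nat) (P : 'X_{1..kv} -> bool).
Hypothesis P0 : P mnm0.
Hypothesis PD : forall a b, P a -> P b -> P (mnm_add a b).

Definition fsupported (E : fsum kv) := all (fun t => P t.1) E.

Lemma fsupported_fmul E F : fsupported E -> fsupported F -> fsupported (fmul E F).
Proof.
move=> /allP hE /allP hF; apply/allP => t /mem_fmul[x xE [y yF ->]].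
by apply: PD; [apply: hE|apply: hF].
Qed.

Lemma fsupported_fsign b : fsupported (fsign kv b).
Proof. by rewrite /fsupported /= P0. Qed.

Lemma fsupported_big (I : Type) (r : seq I) (Q : pred I) (F : I -> fsum kv) :
  (forall i, Q i -> fsupported (F i)) -> fsupported (\big[@fadd kv/fzero kv]_(i <- r | Q i) F i).
Proof.
move=> H; apply: (big_ind fsupported) => // E F' hE hF'.
by rewrite /fsupported /fadd all_cat; apply/andP.
Qed.

Lemma fsupported_bigM (I : Type) (r : seq I) (Q : pred I) (F : I -> fsum kv) :
  (forall i, Q i -> fsupported (F i)) -> fsupported (\big[@fmul kv/fone kv]_(i <- r | Q i) F i).
Proof.
move=> H; apply: (big_ind fsupported) => //; [exact: fsupported_fsign|exact: fsupported_fmul].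
Qed.

Lemma fsupported_fpow E k : fsupported E -> fsupported (fpow E k).
Proof. by move=> hE; elim: k => [|k IH]; [exact: fsupported_fsign|exact: fsupported_fmul]. Qed.

Lemma fsupported_fdet m (M : 'M[fsum kv]_m) :
  (forall i j, fsupported (M i j)) -> fsupported (fdet M).
Proof.
move=> hM; apply: fsupported_big => s _; apply: fsupported_fmul; first exact: fsupported_fsign.
by apply: fsupported_bigM => i _.
Qed.

Lemma fsupported_fpminor m (S : {set 'I_m}) (M : 'M[fsum kv]_m) :
  (forall i j, fsupported (M i j)) -> fsupported (fpminor S M).
Proof.
move=> hM; apply: fsupported_big => s _; apply: fsupported_fmul; first exact: fsupported_fsign.
by apply: fsupported_bigM => i _.
Qed.

End SupportedSums.

(* Generic n x n matrices X_A and X_B: one variable for each entry of A and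
   each entry of B; the variable of entry (i, j) of X_A is indexed by
   (false, i, j) and that of X_B by (true, i, j). *)
Section GenericMatrices.
Variable n : nat.

Definition gvar := (bool * 'I_n * 'I_n)%type.
Definition gkv := #|{: gvar}|.
Local Notation mon := 'X_{1..gkv}.

Definition gvar_id b (i j : 'I_n) : 'I_gkv := enum_rank ((b, i, j) : gvar).
Definition is_Bvar (v : 'I_gkv) : bool := (enum_val v : gvar).1.1.
Definition gmx b : 'M[fsum gkv]_n := \matrix_(i, j) [:: (mnm1 (gvar_id b i j), false)].

Lemma is_Bvar_id b i j : is_Bvar (gvar_id b i j) = b.
Proof. by rewrite /is_Bvar /gvar_id enum_rankK. Qed.

Definition gval (G : ordAbGroup) (A B : 'M[stR G]_n) (v : 'I_gkv) : stR G :=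
  let: (b, i, j) := (enum_val v : gvar) in if b then B i j else A i j.

Lemma mx_eval_gmx (G : ordAbGroup) (A B : 'M[stR G]_n) b :
  mx_eval (gval A B) (gmx b) = if b then B else A.
Proof.
apply/matrixP => i j; rewrite !mxE /fsum_eval big_seq1 mon_eval1 /gval /gvar_id enum_rankK.
by case: b.
Qed.

Definition A_mon (mu : mon) := [forall v, is_Bvar v ==> (mu v == 0%N)].
Definition B_mon (mu : mon) := [forall v, ~~ is_Bvar v ==> (mu v == 0%N)].

Lemma A_mon0 : A_mon mnm0. Proof. by apply/forallP => v; rewrite mnm0E eqxx implybT. Qed.
Lemma B_mon0 : B_mon mnm0. Proof. by apply/forallP => v; rewrite mnm0E eqxx implybT. Qed.

Lemma A_monD a b : A_mon a -> A_mon b -> A_mon (mnm_add a b).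
Proof.
move=> /forallP ha /forallP hb; apply/forallP => v; rewrite mnmDE.
by apply/implyP => bv; move: (ha v) (hb v); rewrite bv /= => /eqP -> /eqP ->.
Qed.

Lemma B_monD a b : B_mon a -> B_mon b -> B_mon (mnm_add a b).
Proof.
move=> /forallP ha /forallP hb; apply/forallP => v; rewrite mnmDE.
by apply/implyP => bv; move: (ha v) (hb v); rewrite bv /= => /eqP -> /eqP ->.
Qed.

Lemma A_mon_cancel x x' y y' : A_mon x -> A_mon x' -> B_mon y -> B_mon y' ->
  mnm_add x y = mnm_add x' y' -> x = x'.
Proof.
move=> /forallP hx /forallP hx' /forallP hy /forallP hy' /mnmP e; apply/mnmP => v.
move: (e v); rewrite !mnmDE; case bv: (is_Bvar v).
  by move: (hx v) (hx' v); rewrite bv /= => /eqP -> /eqP ->.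
by move: (hy v) (hy' v); rewrite bv /= => /eqP -> /eqP ->; rewrite !addn0.
Qed.

Lemma gmx_supported b i j : fsupported (if b then B_mon else A_mon) (gmx b i j).
Proof.
rewrite /fsupported mxE /= andbT; case: b; apply/forallP => v; rewrite mnm1E.
all: by apply/implyP => h; apply/eqP; case: eqP => // e; rewrite -e is_Bvar_id in h.
Qed.

(* det X_A is a nonzero polynomial: it specializes to det I = 1. *)
Lemma det_gmxA_neq0 : (\det (mx_poly (gmx false)) != 0 :> {mpoly int[gkv]})%R.
Proof.
pose v0 (i : 'I_gkv) : int :=
  ((~~ is_Bvar i) && ((enum_val i : gvar).1.2 == (enum_val i : gvar).2))%:R%R.
have h : map_mx (meval v0) (mx_poly (gmx false)) = 1%:M%R.
  apply/matrixP => i j; rewrite !mxE /fsum_poly big_seq1 /= expr0 scale1r.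
  by rewrite mevalXU /v0 is_Bvar_id /gvar_id enum_rankK /=; case: (i == j).
apply/eqP => e; move: (congr1 (meval v0) e); rewrite -det_map_mx h det1 raddf0 => /eqP.
by rewrite oner_eq0.
Qed.

End GenericMatrices.

Lemma sum_indicator_pair_le1 (I J : finType) (f : I -> J -> bool) :
  (forall i j i' j', f i j -> f i' j' -> i = i' /\ j = j') ->
  (\sum_i \sum_j (f i j : nat) <= 1)%N.
Proof.
move=> H; rewrite pair_bigA /=.
case: (pickP (fun p : I * J => f p.1 p.2)) => [p fp|none]; last by rewrite big1 // => q _; rewrite none.
rewrite (bigD1 p) //= fp big1 // => q qp; case fq: (f q.1 q.2) => //.
have [e1 e2] := H _ _ _ _ fp fq.
by move: qp; rewrite [q]surjective_pairing -e1 -e2 -surjective_pairing eqxx.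
Qed.

(* In the principal minors of the generic matrix X_B each monomial encodes
   the support S and the permutation s, so no monomial is repeated in the
   sum of the principal m-minors. *)
Section GenericMinors.
Variable n : nat.
Local Notation kv := (gkv n).

Definition pmon (S : {set 'I_n}) (s : 'S_n) : 'X_{1..kv} :=
  \big[@mnm_add kv/mnm0]_(i in S) mnm1 (gvar_id true i (s i)).

Lemma fpminor_gmxB (S : {set 'I_n}) :
  fpminor S (gmx n true) =
  \big[@fadd kv/fzero kv]_(s : 'S_n | perm_on S s) [:: (pmon S s, odd_perm s)].
Proof.
rewrite /fpminor; apply: eq_bigr => s _.
have -> : \big[@fmul kv/fone kv]_(i in S) gmx n true i (s i) = [:: (pmon S s, false)].
  under eq_bigr do rewrite mxE.
  by rewrite /pmon; symmetry; apply: (big_morph (fun mu => [:: (mu, false)])).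
by rewrite /fmul /= add0m addbF.
Qed.

Lemma pmon_coord S s (i j : 'I_n) :
  pmon S s (gvar_id true i j) = ((i \in S) && (s i == j) : nat).
Proof.
rewrite /pmon mnm_sumE.
under eq_bigr do rewrite mnm1E /gvar_id (inj_eq enum_rank_inj) !xpair_eqE /=.
rewrite big_mkcond (bigD1 i) //= eqxx big1 ?addn0; first by case: (i \in S).
by move=> k /negbTE ki; rewrite ki /=; case: (k \in S).
Qed.

Lemma pmon_inj S s S' s' : perm_on S s -> perm_on S' s' ->
  pmon S s = pmon S' s' -> S = S' /\ s = s'.
Proof.
move=> sS sS' e.
have key i j : ((i \in S) && (s i == j)) = ((i \in S') && (s' i == j)).
  move: (congr1 (fun m : 'X_{1..kv} => m (gvar_id true i j)) e).
  by rewrite !pmon_coord; do 2 case: (_ && _).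
have eS : S = S'.
  apply/setP => i; apply/idP/idP => h.
    by move: (key i (s i)); rewrite h eqxx /= => /esym /andP[].
  by move: (key i (s' i)); rewrite h eqxx andbT => /andP[].
subst S'; split => //; apply/permP => i; case: (boolP (i \in S)) => iS.
  by move: (key i (s i)); rewrite iS eqxx /= => /esym /eqP.
by rewrite (out_perm sS iS) (out_perm sS' iS).
Qed.

Lemma fmult_pminor_sum_le1 m mu :
  (fmult (\big[@fadd kv/fzero kv]_(S : {set 'I_n} | #|S| == m) fpminor S (gmx n true)) mu <= 1)%N.
Proof.
rewrite fmult_big.
have -> : (\sum_(S : {set 'I_n} | #|S| == m) fmult (fpminor S (gmx n true)) mu =
  \sum_(S : {set 'I_n}) \sum_(s : 'S_n)
     ((#|S| == m) && perm_on S s && (pmon S s == mu) : nat))%N.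
  rewrite big_mkcond; apply: eq_bigr => S _; rewrite fpminor_gmxB fmult_big.
  case: (#|S| == m); last by rewrite big1.
  rewrite big_mkcond; apply: eq_bigr => s _; case: (perm_on S s) => //=.
  by rewrite /fmult /= addn0.
apply: sum_indicator_pair_le1 => S s S' s'.
move=> /andP[/andP[_ h1] /eqP e1] /andP[/andP[_ h2] /eqP e2].
by apply: pmon_inj => //; rewrite e1 e2.
Qed.

End GenericMinors.

Section TangibleSums.
Variable G : ordAbGroup.
Local Notation R := (stR G).
Implicit Types x y : R.

Lemma st_add_tangible x y c : st_add x y = stTan c ->
  (x = stTan c /\ ~~ nu_le (stTan c) y) \/ (y = stTan c /\ ~~ nu_le (stTan c) x).
Proof.
case: x => [|a|a]; case: y => [|b|b] //=.
all: try (by move=> [<-]; left); try (by move=> [<-]; right).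
all: case: (oag_cmpP a b) => h // [e]; subst.
all: first [by left; split => //; apply: oag_lt_nle | by right; split => //; apply: oag_lt_nle].
Qed.

Lemma tangible_sum (T : eqType) (s : seq T) (f : T -> R) c :
  \big[@st_add G/stZero]_(t <- s) f t = stTan c ->
  (exists2 t0, t0 \in s & f t0 = stTan c) /\
  count (fun t => nu_le (stTan c) (f t)) s = 1%N.
Proof.
elim: s => [|x s IH]; first by rewrite big_nil.
have count_cons P : count P (x :: s) = (P x + count P s)%N by [].
rewrite big_cons count_cons => /st_add_tangible[[fx nr]|[r nfx]].
  split; first by exists x; rewrite ?mem_head.
  rewrite fx nu_le_refl add1n; congr S; apply/eqP; rewrite -leqn0 leqNgt -has_count.
  apply/hasP => [[t ts]]; apply/negP; apply: contra nr => ct.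
  by apply: nu_le_trans ct (nu_le_term _ ts _).
have [[t0 t0s ft0] c1] := IH r; split; first by exists t0; rewrite ?inE ?t0s ?orbT.
by rewrite (negbTE nfx) c1.
Qed.

Lemma nu_le_cancel (p q d e : R) : st_tangible d -> st_tangible e ->
  st_mul p q = st_mul d e -> nu_le q e -> nu_le d p.
Proof.
case: d => // c _; case: e => // e' _.
case: p => [|a|a]; case: q => [|b|b] //= [] H be.
all: have h1 : (e' + (a - e'))%R = a by rewrite addrC subrK.
all: have h2 : (b + (a - e'))%R = c by rewrite addrA (addrC b a) H addrK.
all: by move: (oag_leD2r (a - e')%R be); rewrite h1 h2.
Qed.

End TangibleSums.

Section DominantTerm.
Variables (G : ordAbGroup) (kv : nat) (val : 'I_kv -> stR G).
Local Notation mon_eval := (mon_eval val).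
Local Notation fsum_eval := (fsum_eval val).

Definition mpow (mu : 'X_{1..kv}) m := iter m (mnm_add mu) mnm0.

Lemma mpowS mu m : mpow mu m.+1 = mnm_add mu (mpow mu m).
Proof. by []. Qed.

Lemma mon_eval_mpow mu m : mon_eval (mpow mu m) = st_pow (mon_eval mu) m.
Proof.
elim: m => [|m IH]; first exact: mon_eval0.
by rewrite mpowS mon_evalD IH.
Qed.

Lemma dominant_term (FA : fsum kv) c : fsum_eval FA = stTan c ->
  exists2 t0, t0 \in FA & [/\ mon_eval t0.1 = stTan c,
    count (fun t => nu_le (stTan c) (mon_eval t.1)) FA = 1%N
  & forall a, a \in FA -> nu_le (stTan c) (mon_eval a.1) -> a = t0].
Proof.
move=> FAc; have [[t0 t0F et0] c1] := tangible_sum FAc.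
exists t0 => //; split => // a aF ha.
have ta : a \in filter (fun t => nu_le (stTan c) (mon_eval t.1)) FA by rewrite mem_filter ha.
have t0a : t0 \in filter (fun t => nu_le (stTan c) (mon_eval t.1)) FA.
  by rewrite mem_filter et0 nu_le_refl.
move: (c1) ta t0a; rewrite -size_filter.
by case: (filter _ _) => [|u [|]] //= _; rewrite !inE => /eqP -> /eqP ->.
Qed.

Lemma fpow_dominant (FA : fsum kv) c : fsum_eval FA = stTan c ->
  exists mu, [/\ mon_eval mu = stTan c, mu \in map fst FA &
    forall m, fmult (fpow FA m) (mpow mu m) = 1%N /\
              (forall x, x \in fpow FA m -> nu_le (mon_eval x.1) (st_pow (stTan c) m))].
Proof.
move=> FAc; have [t0 t0F [et0 c1 uniq_t0]] := dominant_term FAc.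
exists t0.1; split => //; first exact: map_f.
have le_c a : a \in FA -> nu_le (mon_eval a.1) (stTan c).
  by move=> aF; rewrite -FAc /fsum_eval; apply: (nu_le_term (fun t => mon_eval t.1)).
elim=> [|m [IHc IHle]].
  split; first by rewrite /fmult /= eqxx.
  by move=> x; rewrite inE => /eqP ->; rewrite mon_eval0; exact: nu_le_refl.
split; last first.
  move=> x /mem_fmul[a aF [y yP ->]]; rewrite mon_evalD st_powS.
  by apply: nu_le_mul; [apply: le_c|apply: IHle].
rewrite /fpow iterS -/(fpow FA m) fmult_fmul.
transitivity (\sum_(a <- FA) if nu_le (stTan c) (mon_eval a.1) then 1 else 0)%N.
  apply: eq_big_seq => a aF; case: ifP => ha.
    rewrite (uniq_t0 a aF ha) -IHc.
    by apply: eq_count => y; rewrite mpowS eqm_add2l.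
  (* a non-dominant term of FA times a term of FA^m cannot reach c^(m+1) *)
  apply/eqP; rewrite -leqn0 leqNgt -has_count; apply/hasP => [[y yP /eqP e]].
  case/negP: ha; apply: (@nu_le_cancel _ _ (mon_eval y.1) _ (st_pow (stTan c) m)) => //.
  - exact: st_pow_tangible.
  - by rewrite -mon_evalD e mpowS mon_evalD mon_eval_mpow et0.
  - exact: IHle.
by move: c1; rewrite -sum1_count big_mkcond.
Qed.

End DominantTerm.

Lemma uniq_map_fst (X Y : eqType) (s : seq (X * Y)) :
  (forall x, (count (fun t => t.1 == x) s <= 1)%N) -> uniq (map fst s).
Proof.
elim: s => [|t s IH] //= cs; rewrite IH ?andbT.
  apply/mapP => [[u us et]]; have := cs t.1; rewrite /= eqxx add1n ltnS leqn0.
  by rewrite -leqn0 leqNgt -has_count => /negP; apply; apply/hasP; exists u; rewrite ?et.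
by move=> x; move: (cs x); rewrite /=; case: (t.1 == x) => //= h; apply: leq_trans h.
Qed.

(* Transfer for a product FA^m FB with FA of tangible value c, when the
   monomials of FA and of FB live in two "independent" submonoids (a product
   of one of each determines its factors) and FB has no repeated monomial:
   the dominant term of FA^m times the terms of FB give the set D required
   by the transfer principle. *)
Section TransferProduct.
Variables (G : ordAbGroup) (kv : nat) (val : 'I_kv -> stR G).
Variables (PA PB : 'X_{1..kv} -> bool).
Hypothesis PA0 : PA mnm0.
Hypothesis PAD : forall a b, PA a -> PA b -> PA (mnm_add a b).
Hypothesis PAB_cancel : forall x x' y y', PA x -> PA x' -> PB y -> PB y' ->
  mnm_add x y = mnm_add x' y' -> x = x'.
Local Notation mon_eval := (mon_eval val).
Local Notation fsum_eval := (fsum_eval val).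

Lemma transfer_product (FA FB E : fsum kv) c m :
  fsum_poly E = fsum_poly (fmul (fpow FA m) FB) ->
  fsum_eval FA = stTan c -> fsupported PA FA -> fsupported PB FB ->
  (forall mu, fmult FB mu <= 1)%N ->
  gsurp (fsum_eval E) (st_mul (st_pow (stTan c) m) (fsum_eval FB)).
Proof.
move=> eE FAc suppA suppB multB.
have [mu [emu _ pow_mu]] := fpow_dominant FAc; have [mult_mu _] := pow_mu m.
have /allP suppApow : fsupported PA (fpow FA m) by apply: fsupported_fpow.
have /allP suppB' := suppB.
have Amu : PA (mpow mu m).
  have /fmult_gt0_mem/mapP[t tP ->] : (0 < fmult (fpow FA m) (mpow mu m))%N by rewrite mult_mu.
  exact: suppApow.
pose D := map (mnm_add (mpow mu m)) (map fst FB).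
have FBc : fsum_eval (fmul (fpow FA m) FB) = st_mul (st_pow (stTan c) m) (fsum_eval FB).
  by rewrite fsum_eval_fmul fsum_eval_fpow FAc.
rewrite -FBc; apply: (transfer (D := D)) => //.
- by rewrite map_inj_uniq; [apply: uniq_map_fst | exact: addmI].
- move=> x /mapP[w /mapP[t tFB ->] ->].
  have mult_t : fmult FB t.1 = 1%N.
    apply/eqP; rewrite eqn_leq multB /= /fmult -has_count; apply/hasP; by exists t.
  rewrite fmult_fmul -{}mult_mu /fmult -sum1_count [RHS]big_mkcond.
  apply: eq_big_seq => y yP /=; case: eqP => [->|ne].
    by rewrite -mult_t; apply: eq_count => z; rewrite eqm_add2l.
  (* an A-monomial other than mu^m cannot be completed to mu^m t.1 within FB *)
  apply/eqP; rewrite -leqn0 leqNgt -has_count; apply/hasP => [[z zF /eqP e]]; apply: ne.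
  by apply: (PAB_cancel _ _ _ _ e); [apply: suppApow|exact: Amu|apply: suppB'|apply: suppB'].
- rewrite big_map big_map FBc /fsum_eval big_distrr /=.
  by apply: eq_bigr => t _; rewrite mon_evalD mon_eval_mpow emu.
Qed.

End TransferProduct.

Section PrincipalMinorSums.
Variables (G : ordAbGroup) (n : nat).
Local Notation R := (stR G).
Local Notation kv := (gkv n).

Definition st_pminor_sum (M : 'M[R]_n) m : R :=
  \big[@st_add G/stZero]_(S : {set 'I_n} | #|S| == m) st_det (st_principal S M).
Definition fpminor_sum (M : 'M[fsum kv]_n) m : fsum kv :=
  \big[@fadd kv/fzero kv]_(S : {set 'I_n} | #|S| == m) fpminor S M.

Lemma fsum_eval_fpminor_sum (val : 'I_kv -> R) (M : 'M[fsum kv]_n) m :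
  fsum_eval val (fpminor_sum M m) = st_pminor_sum (mx_eval val M) m.
Proof. by rewrite fsum_eval_big; apply: eq_bigr => S _; rewrite fsum_eval_fpminor. Qed.

Lemma st_pevalmx_entry m (f : {ffun 'I_m.+1 -> R}) (M : 'M[R]_n) i j :
  st_pevalmx f M i j = \big[@st_add G/stZero]_(k < m.+1) st_mul (f k) (st_expmx M k i j).
Proof.
rewrite /st_pevalmx (big_morph (fun N : 'M[R]_n => N i j) (id1 := stZero) (op1 := @st_add G)).
- by apply: eq_bigr => k _; rewrite mxE.
- by move=> x y; rewrite mxE.
- by rewrite mxE.
Qed.

End PrincipalMinorSums.

Section ConjugationBound.
Variables (G : ordAbGroup) (n : nat) (A B : 'M[stR G]_n).
Local Notation val := (gval A B).
Local Notation XA := (gmx n false).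
Local Notation XB := (gmx n true).
Local Notation kv := (gkv n).

Lemma pminor_sum_adj_gsurp m : st_tangible (st_det A) ->
  gsurp (st_pminor_sum (st_mulmx (st_mulmx (st_adj A) B) A) m)
        (st_mul (st_pow (st_det A) m) (st_pminor_sum B m)).
Proof.
have [evA evB] : mx_eval val XA = A /\ mx_eval val XB = B by rewrite !mx_eval_gmx.
have suppXA i j : fsupported (@A_mon n) (XA i j) := gmx_supported false i j.
have suppXB i j : fsupported (@B_mon n) (XB i j) := gmx_supported true i j.
have polyE : fsum_poly (fpminor_sum (fmulmx (fmulmx (fadj XA) XB) XA) m) =
             fsum_poly (fmul (fpow (fdet XA) m) (fpminor_sum XB m)).
  rewrite fsum_poly_fmul fsum_poly_fpow fsum_poly_fdet !fsum_poly_big.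
  under eq_bigr do rewrite fsum_poly_fpminor !mx_poly_fmulmx mx_poly_fadj.
  rewrite pminor_sum_conj ?det_gmxA_neq0 //; congr (_ * _)%R.
  by apply: eq_bigr => S _; rewrite fsum_poly_fpminor.
case detA: (st_det A) => [|c|c] // _.
have := @transfer_product G kv val _ _ (@A_mon0 n) (@A_monD n) (@A_mon_cancel n)
  (fdet XA) (fpminor_sum XB m) _ c m polyE.
rewrite !fsum_eval_fpminor_sum !mx_eval_fmulmx mx_eval_fadj evA evB fsum_eval_fdet evA.
apply=> //; last exact: fmult_pminor_sum_le1.
- exact: (@fsupported_fdet _ _ (@A_mon0 n) (@A_monD n)).
- apply: fsupported_big => S _.
  exact: (@fsupported_fpminor _ _ (@B_mon0 n) (@B_monD n)).
Qed.

End ConjugationBound.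

(* Each entry is
   the value of a formal sum that vanishes as a polynomial by the classical
   Cayley-Hamilton theorem for X_B. *)
Lemma st_cayley_hamilton (G : ordAbGroup) n (B : 'M[stR G]_n) :
  st_ghostmx (st_pevalmx (st_charpoly B) B).
Proof.
move=> i j; pose val := gval B B; pose XB := gmx n true; pose kv := gkv n.
pose E := \big[@fadd kv/fzero kv]_(k < n.+1)
   fmul (fmul (fsign kv (odd (n - k))) (fpminor_sum XB (n - k))) (fexpmx XB k i j).
have evB : mx_eval val XB = B by rewrite mx_eval_gmx.
have -> : st_pevalmx (st_charpoly B) B i j = fsum_eval val E.
  rewrite st_pevalmx_entry /E fsum_eval_big; apply: eq_bigr => k _.
  rewrite !fsum_eval_fmul fsum_eval_fsign st_mul1r fsum_eval_fpminor_sum ffunE evB.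
  by congr st_mul; rewrite -[in LHS]evB -mx_eval_fexpmx mxE.
apply: transfer0.
have := congr1 (fun M : 'M[{mpoly int[kv]}]_n => M i j) (cayley_hamilton_pminor (mx_poly XB)).
rewrite /= summxE mxE => <-; rewrite /E fsum_poly_big; apply: eq_bigr => k _.
rewrite !mxE !fsum_poly_fmul fsum_poly_fsign signr_odd fsum_poly_big.
rewrite -mx_poly_fexpmx mxE; congr (_ * _ * _)%R.
by apply: eq_bigr => S _; rewrite fsum_poly_fpminor.
Qed.

Section Scaling.
Variables (G : ordAbGroup) (c : stR G).

Lemma st_mulmx_scalel n (X Y : 'M[stR G]_n) :
  st_mulmx (st_scalemx c X) Y = st_scalemx c (st_mulmx X Y).
Proof.
apply/matrixP => i j; rewrite !mxE big_distrr /=; apply: eq_bigr => l _.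
by rewrite mxE st_mulA.
Qed.

Lemma st_principal_scale n (S : {set 'I_n}) (M : 'M[stR G]_n) :
  st_principal S (st_scalemx c M) = st_scalemx c (st_principal S M).
Proof. by apply/matrixP => i j; rewrite !mxE. Qed.

Lemma st_det_scale p (M : 'M[stR G]_p) :
  st_det (st_scalemx c M) = st_mul (st_pow c p) (st_det M).
Proof.
rewrite /st_det big_distrr /=; apply: eq_bigr => s _.
rewrite -[st_pow c p]big_const_ord -big_split /=; apply: eq_bigr => i _; by rewrite mxE.
Qed.

End Scaling.

(* Each coefficient of f_{A^nabla B A} ghost-surpasses that of f_B: the
   factor det(A)^{-m} from A^nabla cancels the det(A)^m of Lemma
   pminor_sum_adj_gsurp. *)
Lemma charpoly_conj_gsurp (G : ordAbGroup) n (A B : 'M[stR G]_n) (k : 'I_n.+1) :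
  st_nonsingular A ->
  gsurp (st_charpoly (st_mulmx (st_mulmx (st_nabla A) B) A) k) (st_charpoly B k).
Proof.
rewrite /st_nonsingular => detA; rewrite !ffunE -!/(st_pminor_sum _ _).
set m := (n - k)%N; set c := st_inv (st_det A).
have -> : st_pminor_sum (st_mulmx (st_mulmx (st_nabla A) B) A) m =
          st_mul (st_pow c m) (st_pminor_sum (st_mulmx (st_mulmx (st_adj A) B) A) m).
  rewrite /st_pminor_sum big_distrr /=; apply: eq_bigr => S /eqP <-.
  by rewrite /st_nabla !st_mulmx_scalel st_principal_scale st_det_scale.
have c_inv : st_mul (st_pow c m) (st_pow (st_det A) m) = st_one G.
  by rewrite -st_pow_mul /c; case: (st_det A) detA => // a _ /=; rewrite addNr st_pow_one.
apply: gsurp_trans (gsurpM (gsurp_refl (st_pow c m)) (pminor_sum_adj_gsurp B m detA)) _.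
by rewrite st_mulA c_inv st_mul1r; exact: gsurp_refl.
Qed.

Theorem corollary5p5 (G : ordAbGroup) (n : nat)
    (A B B' : 'M[stR G]_n) :
  st_nonsingular A ->
  B' = st_mulmx (st_mulmx (st_nabla A) B) A ->
  [/\ (forall l : stR G, st_eigenvalue B l -> st_eigenvalue B' l),
      ((forall k : 'I_n.+1, st_tanz (st_charpoly B' k)) ->
         st_charpoly B' = st_charpoly B)
    & st_ghostmx (st_pevalmx (st_charpoly B') B)].
Proof.
move=> nsA eB'.
have coef k : gsurp (st_charpoly B' k) (st_charpoly B k).
  by rewrite eB'; apply: charpoly_conj_gsurp.
split.
- (* f_{B'}(l) surpasses the ghost f_B(l) *)
  move=> l [lT lroot]; split => //; apply: (gsurp_ghostz _ lroot).
  by apply: gsurp_big => k _; apply: gsurpM (coef k) (gsurp_refl _).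
- (* tangible coefficients only surpass themselves *)
  by move=> tz; apply/ffunP => k; apply: gsurp_tanz (coef k) (tz k).
- (* f_{B'}(B) surpasses the ghost matrix f_B(B) entrywise *)
  move=> i j; apply: (gsurp_ghostz _ (st_cayley_hamilton B i j)).
  by rewrite !st_pevalmx_entry; apply: gsurp_big => k _; apply: gsurpM (coef k) (gsurp_refl _).
Qed.
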